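(* Let $G$ be a group. Suppose $G$ has a $k$-paradoxical decomposition with translating sets $S_1,\ldots,S_k$ and an $l$-paradoxical decomposition with translating sets $T_1,\ldots,T_l$. Then $G$ has a $kl$-paradoxical decomposition with translating sets $\{S_iT_j: 1\le i\le k,\ 1\le j\le l\}$.
   Context: For $k\geq2$, $G$ admits a $k$-paradoxical decomposition with translating sets $S_1=\{g_{1,1},\ldots,g_{1,n_1}\},\ldots,S_k=\{g_{k,1},\ldots,g_{k,n_k}\}$ (finite subsets of $G$) if there are pairwise disjoint subsets $P_{i,j}$ ($1\le i\le k$, $1\le j\le n_i$) of $G$ such that $G=\bigcup_{j=1}^{n_i}P_{i,j}g_{i,j}$ for each $i$. $S_iT_j=\{st: s\in S_i, t\in T_j\}$. *)

From HB Require Import structures.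
From mathcomp Require Import all_boot.
From mathcomp Require Import boolp classical_sets cardinality.
Set Implicit Arguments. Unset Strict Implicit. Unset Printing Implicit Defensive.
Local Open Scope classical_set_scope.

Record group_axioms (G : Type) (mul : G -> G -> G) (one : G) (inv : G -> G)
  : Prop := GroupAxioms {
  mulA : forall x y z, mul x (mul y z) = mul (mul x y) z;
  mul1g : forall x, mul one x = x;
  mulg1 : forall x, mul x one = x;
  mulVg : forall x, mul (inv x) x = one;
  mulgV : forall x, mul x (inv x) = one }.

Definition rtrans (G : Type) (mul : G -> G -> G) (P : set G) (g : G) : set G :=
  [set mul p g | p in P].

Definition setmul (G : Type) (mul : G -> G -> G) (S T : set G) : set G :=
  [set mul s t | s in S & t in T].

Definition paradoxical_decomposition (G : Type) (mul : G -> G -> G)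
    (I : finType) (S : I -> set G) : Prop :=
  (forall i, finite_set (S i)) /\
  exists P : I -> G -> set G,
    (forall i g j h, S i g -> S j h -> (i, g) <> (j, h) ->
       P i g `&` P j h = set0) /\
    (forall i, \bigcup_(g in S i) rtrans mul (P i g) g = setT).

Definition k_paradoxical (G : Type) (mul : G -> G -> G) (k : nat)
    (S : 'I_k -> set G) : Prop :=
  paradoxical_decomposition mul S.

(* Refine the first decomposition by the second: the piece indexed by (i, j)
   and the product s t consists of the x in P_{i,s} with x s in Q_{j,t}.  Every
   y in G is y = q t with q in Q_{j,t}, and q = p s with p in P_{i,s}, so
   y = p (s t).  Disjointness first recovers (i, s) from x, then (j, t) from
   x s. *)
From mathcomp Require Import all_boot.
From mathcomp Require Import boolp classical_sets cardinality.
Set Implicit Arguments. Unset Strict Implicit.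
Local Open Scope classical_set_scope.

Lemma eq_index_of_meet (G I : Type) (S : I -> set G) (P : I -> G -> set G)
    i g j h x :
    (forall i g j h, S i g -> S j h -> (i, g) <> (j, h) ->
       P i g `&` P j h = set0) ->
  S i g -> S j h -> P i g x -> P j h x -> (i, g) = (j, h).
Proof.
move=> disjP Sig Sjh Pigx Pjhx; apply: contrapT => neq.
by have := disjP i g j h Sig Sjh neq; move/seteqP => [/(_ x (conj Pigx Pjhx))].
Qed.

Section ProductDecomposition.

Variables (G : Type) (mul : G -> G -> G).
Hypothesis mulA : associative mul.

Variables (I J : finType) (S : I -> set G) (T : J -> set G).
Variables (P : I -> G -> set G) (Q : J -> G -> set G).

Definition prod_piece (ij : I * J) (g : G) : set G :=
  [set p | exists s t, [/\ S ij.1 s, T ij.2 t, mul s t = g,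
                           P ij.1 s p & Q ij.2 t (mul p s)]].

Hypothesis disjP : forall i g j h, S i g -> S j h -> (i, g) <> (j, h) ->
  P i g `&` P j h = set0.
Hypothesis disjQ : forall i g j h, T i g -> T j h -> (i, g) <> (j, h) ->
  Q i g `&` Q j h = set0.

Lemma prod_piece_disjoint ij g ij' h :
    setmul mul (S ij.1) (T ij.2) g -> setmul mul (S ij'.1) (T ij'.2) h ->
  (ij, g) <> (ij', h) -> prod_piece ij g `&` prod_piece ij' h = set0.
Proof.
case: ij ij' => [i j] [i' j'] _ _ neq /=.
apply/seteqP; split => // x [[s [t [Ss Tt gE Px Qx]]] [s' [t' [Ss' Tt' hE Px' Qx']]]].
have [ii' ss'] : (i, s) = (i', s').
  exact: (eq_index_of_meet disjP Ss Ss' Px Px').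
subst i' s'.
have [jj' tt'] : (j, t) = (j', t').
  exact: (eq_index_of_meet disjQ Tt Tt' Qx Qx').
subst j' t'.
by apply: neq; rewrite -gE -hE.
Qed.

Hypothesis coverP : forall i, \bigcup_(g in S i) rtrans mul (P i g) g = setT.
Hypothesis coverQ : forall j, \bigcup_(g in T j) rtrans mul (Q j g) g = setT.

Lemma prod_piece_cover ij :
  \bigcup_(g in setmul mul (S ij.1) (T ij.2)) rtrans mul (prod_piece ij g) g
    = setT.
Proof.
case: ij => [i j]; apply/seteqP; split => // x _.
have [t Tt [q Qq xE]] : (\bigcup_(g in T j) rtrans mul (Q j g) g) x by rewrite coverQ.
have [s Ss [p Pp qE]] : (\bigcup_(g in S i) rtrans mul (P i g) g) q by rewrite coverP.
exists (mul s t); first by exists s => //; exists t.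
exists p; last by rewrite -xE -qE mulA.
by exists s, t; split => //; rewrite qE.
Qed.

End ProductDecomposition.

Lemma paradoxical_decomposition_prod (G : Type) (mul : G -> G -> G)
    (mulA : associative mul) (I J : finType) (S : I -> set G) (T : J -> set G) :
  paradoxical_decomposition mul S -> paradoxical_decomposition mul T ->
  paradoxical_decomposition mul
    (fun ij : I * J => setmul mul (S ij.1) (T ij.2)).
Proof.
move=> [finS [P [disjP coverP]]] [finT [Q [disjQ coverQ]]].
split; first by move=> [i j]; exact: finite_image2.
exists (prod_piece mul S T P Q); split.
- exact: prod_piece_disjoint.
- exact: prod_piece_cover.
Qed.

Theorem lemma3p3 (G : Type) (mul : G -> G -> G) (one : G) (inv : G -> G)
    (HG : group_axioms mul one inv)
    (k l : nat) (hk : (2 <= k)%N) (hl : (2 <= l)%N)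
    (S : 'I_k -> set G) (T : 'I_l -> set G) :
  k_paradoxical mul S -> k_paradoxical mul T ->
  paradoxical_decomposition mul
    (fun ij : 'I_k * 'I_l => setmul mul (S ij.1) (T ij.2)).
Proof. exact: (paradoxical_decomposition_prod (mulA HG)). Qed.
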